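(* Let $(H,\alpha_H)$ be an object of $\overline{\mathcal H}^{i,j}(Vec_\Bbbk)$ and let $\Delta_H:H\to H\otimes H$ (written $h\mapsto h_1\otimes h_2$) and $\varepsilon_H:H\to\Bbbk$ be morphisms in $\overline{\mathcal H}^{i,j}(Vec_\Bbbk)$. Consider the functor $\ddot H=-\otimes H$ on $\overline{\mathcal H}^{i,j}(Vec_\Bbbk)$, $(X,\alpha_X)\mapsto(X\otimes H,\alpha_X\otimes\alpha_H)$, with natural transformations $\delta_X:X\otimes H\to(X\otimes H)\otimes H$, $x\otimes h\mapsto(\alpha_X(x)\otimes h_1)\otimes\alpha_H^{-1}(h_2)$, and $\epsilon_X:X\otimes H\to X$, $x\otimes h\mapsto\varepsilon_H(h)\alpha_X^{-1}(x)$. Then $(\ddot H,\delta,\epsilon)$ is a comonad on $\overline{\mathcal H}^{i,j}(Vec_\Bbbk)$ if and only if $(H,\alpha_H,\Delta_H,\varepsilon_H)$ is a Hom-coalgebra. Moreover, the category of right $H$-Hom-comodules coincides with the category of $\ddot H$-comodules in $\overline{\mathcal H}^{i,j}(Vec_\Bbbk)$.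
   Context: $\Bbbk$ is a field of characteristic $0$; all vector spaces are finite-dimensional; $i,j$ are fixed integers. $\overline{\mathcal H}^{i,j}(Vec_\Bbbk)$ is the monoidal category whose objects are pairs $(X,\alpha_X)$ with $X$ a finite-dimensional $\Bbbk$-space and $\alpha_X$ a linear automorphism of $X$; morphisms $f:(X,\alpha_X)\to(Y,\alpha_Y)$ are linear maps with $\alpha_Y\circ f=f\circ\alpha_X$; $(X,\alpha_X)\otimes(Y,\alpha_Y)=(X\otimes Y,\alpha_X\otimes\alpha_Y)$, unit $(\Bbbk,\mathrm{id})$; associativity $a_{X,Y,Z}((x\otimes y)\otimes z)=\alpha_X^{i+1}(x)\otimes(y\otimes\alpha_Z^{-j-1}(z))$; unit constraints $l_X(\lambda\otimes x)=\lambda\alpha_X^{j+1}(x)$, $r_X(x\otimes\lambda)=\lambda\alpha_X^{i+1}(x)$. A Hom-coalgebra $(C,\alpha,\Delta,\varepsilon)$: $\varepsilon\circ\alpha=\varepsilon$, $\alpha(c_1)\otimes\Delta(c_2)=\Delta(c_1)\otimes\alpha(c_2)$, $\varepsilon(c_1)c_2=c_1\varepsilon(c_2)=\alpha(c)$. A right $H$-Hom-comodule is $(M,\alpha_M,\rho^M)$, $(M,\alpha_M)$ an object of $\overline{\mathcal H}^{i,j}(Vec_\Bbbk)$, $\rho^M:M\to M\otimes H$, $m\mapsto m_0\otimes m_1$, a morphism there, with $\alpha_M(m_0)\otimes\Delta(m_1)=\rho^M(m_0)\otimes\alpha_H(m_1)$ and $\varepsilon(m_1)m_0=\alpha_M(m)$;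 morphisms are colinear maps commuting with the $\alpha$'s. A comonad on a category: endofunctor $F$, natural $\Delta:F\to FF$, $\varepsilon:F\to\mathrm{id}$ with $F\Delta\circ\Delta=\Delta F\circ\Delta$, $F\varepsilon\circ\Delta=\varepsilon F\circ\Delta=\mathrm{id}$; a comodule is $(X,\rho)$, $\rho:X\to FX$, $F\rho\circ\rho=\Delta_X\circ\rho$, $\varepsilon_X\circ\rho=\mathrm{id}_X$. *)

(* Model of the category \overline{H}^{i,j}(Vec_k):
   a finite-dimensional k-space is represented (up to isomorphism) by k^n,
   i.e. row vectors 'rV[K]_n; a linear map k^n -> k^m is a matrix
   f : 'M[K]_(n,m) acting on the right, x |-> x *m f, so that the
   composite "g o f" is  f *m g.  The tensor product k^n (x) k^m is k^(n*m)
   with the Kronecker product (tensmx, notation  *t , from mathcomp's mxtens,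
   lexicographic index  i*m + j), so (x (x) y) *m (f *t g) = (x f) (x) (y g).
   With that convention the canonical vector-space identification
   X (x) (Y (x) Z) = (X (x) Y) (x) Z is the cast along  mulnA. *)
From HB Require Import structures.
From mathcomp Require Import all_boot all_order all_algebra.
From mathcomp Require Export mxtens.
Set Implicit Arguments.
Unset Strict Implicit.
Unset Printing Implicit Defensive.
Import GRing.Theory.
Local Open Scope ring_scope.

Section HomCat.
Variable K : fieldType.

Lemma tensmx_unit_any m n (A : 'M[K]_m) (B : 'M[K]_n) :
  A \in unitmx -> B \in unitmx -> (A *t B) \in unitmx.
Proof.
case: m A => [|m] A; case: n B => [|n] B uA uB.
- move: (A *t B); rewrite mul0n => C; by rewrite unitmxE det_mx00 unitr1.
- move: (A *t B); rewrite mul0n => C; by rewrite unitmxE det_mx00 unitr1.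
- move: (A *t B); rewrite muln0 => C; by rewrite unitmxE det_mx00 unitr1.
- by apply: tensmx_unit.
Qed.

Record obj := Obj {
  odim : nat;
  oalpha : 'M[K]_odim;
  oalpha_unit : oalpha \in unitmx }.

Definition is_mor (X Y : obj) (f : 'M[K]_(odim X, odim Y)) : Prop :=
  oalpha X *m f = f *m oalpha Y.

Definition tens_obj (X Y : obj) : obj :=
  Obj (tensmx_unit_any (oalpha_unit X) (oalpha_unit Y)).

Definition unit_obj : obj := @Obj 1 1%:M (unitmx1 _ _).

Section Comonad.
Variables (H : obj) (Delta : 'M[K]_(odim H, odim H * odim H))
          (eps : 'M[K]_(odim H, 1)).

Definition Hdd (X : obj) : obj := tens_obj X H.
Definition Hdd_mor (X Y : obj) (f : 'M[K]_(odim X, odim Y)) :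
  'M[K]_(odim (Hdd X), odim (Hdd Y)) := f *t (1%:M : 'M[K]_(odim H)).

Definition delta (X : obj) : 'M[K]_(odim (Hdd X), odim (Hdd (Hdd X))) :=
  castmx (erefl _, mulnA _ _ _)
    (oalpha X *t (Delta *m ((1%:M : 'M[K]_(odim H)) *t invmx (oalpha H)))).

Definition epsC (X : obj) : 'M[K]_(odim (Hdd X), odim X) :=
  castmx (erefl _, muln1 _) (invmx (oalpha X) *t eps).

Definition is_comonad : Prop :=
  (forall X, is_mor (delta X)) /\
  (forall X, is_mor (epsC X)) /\
  (forall X Y (f : 'M[K]_(odim X, odim Y)), is_mor f ->
        delta X *m Hdd_mor (Hdd_mor f) = Hdd_mor f *m delta Y) /\
  (forall X Y (f : 'M[K]_(odim X, odim Y)), is_mor f ->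
        epsC X *m f = Hdd_mor f *m epsC Y) /\
  (forall X, delta X *m Hdd_mor (delta X) = delta X *m delta (Hdd X)) /\
  (forall X, delta X *m Hdd_mor (epsC X) = 1%:M) /\
  (forall X, delta X *m epsC (Hdd X) = 1%:M).

Definition is_hom_coalgebra : Prop :=
  [/\
      oalpha H *m eps = eps,
      (* alpha(c_1) (x) Delta(c_2) = Delta(c_1) (x) alpha(c_2) *)
      castmx (erefl _, mulnA _ _ _) (Delta *m (oalpha H *t Delta))
        = Delta *m (Delta *t oalpha H),
      castmx (erefl _, mul1n _) (Delta *m (eps *t 1%:M)) = oalpha H &
      castmx (erefl _, muln1 _) (Delta *m (1%:M *t eps)) = oalpha H].

Definition is_hom_comodule (M : obj) (rho : 'M[K]_(odim M, odim M * odim H))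
  : Prop :=
  [/\ @is_mor M (tens_obj M H) rho,
      (* alpha_M(m_0) (x) Delta(m_1) = rho(m_0) (x) alpha_H(m_1) *)
      castmx (erefl _, mulnA _ _ _) (rho *m (oalpha M *t Delta))
        = rho *m (rho *t oalpha H) &
      castmx (erefl _, muln1 _) (rho *m (1%:M *t eps)) = oalpha M].

Definition hom_comodule_mor (M N : obj)
  (rhoM : 'M[K]_(odim M, odim M * odim H)) (rhoN : 'M[K]_(odim N, odim N * odim H))
  (f : 'M[K]_(odim M, odim N)) : Prop :=
  is_mor f /\ f *m rhoN = rhoM *m (f *t 1%:M).

Definition is_comonad_comodule (M : obj) (rho : 'M[K]_(odim M, odim (Hdd M)))
  : Prop :=
  [/\ @is_mor M (Hdd M) rho,
      rho *m Hdd_mor rho = rho *m delta M &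
      rho *m epsC M = 1%:M].

Definition comonad_comodule_mor (M N : obj)
  (rhoM : 'M[K]_(odim M, odim (Hdd M))) (rhoN : 'M[K]_(odim N, odim (Hdd N)))
  (f : 'M[K]_(odim M, odim N)) : Prop :=
  is_mor f /\ rhoM *m Hdd_mor f = f *m rhoN.

End Comonad.
End HomCat.

(* Every structure map of the comonad [- (x) H] on (X, alpha_X) is [alpha_X^{+-1}] tensored
   with a fixed map built from [Delta], [eps] and [alpha_H]; e.g. coassociativity of the
   comonad at X reads [alpha_X^2 (x) P = alpha_X^2 (x) Q] with [P], [Q] independent of X.
   Hence each comonad law holds for all X iff it holds at the unit object (k, id), where it
   becomes, after cancelling invertible factors in [alpha_H], the corresponding Hom-coalgebra
   axiom.  The same bookkeeping identifies the two comodule notions. *)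
From HB Require Import structures.
From mathcomp Require Import all_boot all_order all_algebra.
From mathcomp Require Import mxtens.
Set Implicit Arguments.
Unset Strict Implicit.
Unset Printing Implicit Defensive.
Import GRing.Theory.
Local Open Scope ring_scope.

Section KroneckerCast.
Variable R : comPzRingType.

Lemma tensmx11 m n : (1%:M : 'M[R]_m) *t (1%:M : 'M[R]_n) = 1%:M.
Proof.
apply/matrixP=> i j.
case: (mxtens_indexP i)=> i1 i2; case: (mxtens_indexP j)=> j1 j2.
rewrite tensmxE !mxE (inj_eq (can_inj (@mxtens_indexK m n))) xpair_eqE.
by case: (i1 == j1); case: (i2 == j2); rewrite /= ?mulr1 ?mul0r ?mulr0.
Qed.

Lemma tensmxA m n p q r s (A : 'M[R]_(m, n)) (B : 'M[R]_(p, q)) (C : 'M[R]_(r, s)) :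
  (A *t B) *t C = castmx (mulnA m p r, mulnA n q s) (A *t (B *t C)).
Proof.
have reassoc a b c (x : 'I_a) (y : 'I_b) (z : 'I_c) (eabc : (a * b * c = a * (b * c))%N) :
    cast_ord eabc (mxtens_index (mxtens_index (x, y), z))
  = mxtens_index (x, mxtens_index (y, z)).
  by apply: val_inj => /=; rewrite mulnDl -mulnA addnA.
apply/matrixP=> i j; rewrite castmxE.
case: (mxtens_indexP i)=> i1 i2; case: (mxtens_indexP i1)=> i11 i12.
case: (mxtens_indexP j)=> j1 j2; case: (mxtens_indexP j1)=> j11 j12.
by rewrite !reassoc !tensmxE mulrA.
Qed.

Lemma tensmx_castl m m' n n' p q (em : m = m') (en : n = n')
    (A : 'M[R]_(m, n)) (B : 'M[R]_(p, q)) :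
  castmx (em, en) A *t B
  = castmx (congr1 (muln^~ p) em, congr1 (muln^~ q) en) (A *t B).
Proof. by case: m' / em; case: n' / en; rewrite !castmx_id. Qed.

Lemma tensmx_castr m n p p' q q' (ep : p = p') (eq : q = q')
    (A : 'M[R]_(m, n)) (B : 'M[R]_(p, q)) :
  A *t castmx (ep, eq) B
  = castmx (congr1 (muln m) ep, congr1 (muln n) eq) (A *t B).
Proof. by case: p' / ep; case: q' / eq; rewrite !castmx_id. Qed.

Lemma mulmx_castmx m m' n n' p p' (em : m = m') (en en' : n = n') (ep : p = p')
    (A : 'M[R]_(m, n)) (B : 'M[R]_(n, p)) :
  castmx (em, en) A *m castmx (en', ep) B = castmx (em, ep) (A *m B).
Proof.
rewrite (eq_irrelevance en' en); clear en'.
by case: m' / em; case: n' / en; case: p' / ep; rewrite !castmx_id.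
Qed.

Lemma mulmx_castr m n p p' (ep : p = p') (A : 'M[R]_(m, n)) (B : 'M[R]_(n, p)) :
  A *m castmx (erefl, ep) B = castmx (erefl, ep) (A *m B).
Proof. by case: p' / ep; rewrite !castmx_id. Qed.

Lemma mulmx_cast_inner m n n' p p' (en : n = n') (ep : p = p')
    (A : 'M[R]_(m, n')) (B : 'M[R]_(n, p)) :
  A *m castmx (en, ep) B = castmx (erefl, ep) (castmx (erefl, esym en) A *m B).
Proof. by case: n' / en in A *; case: p' / ep; rewrite !castmx_id. Qed.

Lemma castmx_inj m n m' n' (e e' : (m = m') * (n = n')) (A B : 'M[R]_(m, n)) :
  castmx e A = castmx e' B -> A = B.
Proof. by rewrite (eq_castmx _ e) => /(congr1 (castmx (esym e.1, esym e.2))); rewrite !castmxK. Qed.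

Lemma castmx_eq_castmxE m n m' n' m'' n'' (e : (m = m') * (n = n'))
    (e' : (m'' = m') * (n'' = n')) (e'' : (m'' = m) * (n'' = n))
    (A : 'M[R]_(m, n)) (B : 'M[R]_(m'', n'')) :
  castmx e A = castmx e' B <-> A = castmx e'' B.
Proof.
case: e e' e'' => [e1 e2] [e1' e2'] [e1'' e2'']; split=> eqAB.
  by apply: (@castmx_inj _ _ _ _ (e1, e2) (e1, e2)); rewrite eqAB castmx_comp; apply: eq_castmx.
by rewrite eqAB castmx_comp; apply: eq_castmx.
Qed.

Lemma castmx_muln1_mul k n p (M : 'M[R]_(k, n * 1)) (C : 'M[R]_(n, p)) :
  castmx (erefl, muln1 n) M *m C = castmx (erefl, muln1 p) (M *m (C *t 1%:M)).
Proof.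
rewrite tens_mx_scalar scale1r mulmx_cast_inner castmx_comp castmx_id.
by congr (_ *m _); apply: eq_castmx.
Qed.

Lemma castmx_mul1n_mul k n p (M : 'M[R]_(k, 1 * n)) (C : 'M[R]_(n, p)) :
  castmx (erefl, mul1n n) M *m C = castmx (erefl, mul1n p) (M *m (1%:M *t C)).
Proof.
rewrite tens_scalar1mx mulmx_cast_inner castmx_comp castmx_id.
by congr (_ *m _); apply: eq_castmx.
Qed.

End KroneckerCast.

Section InvertibleKronecker.
Variable K : fieldType.

Lemma invmx_tens m n (A : 'M[K]_m) (B : 'M[K]_n) :
  A \in unitmx -> B \in unitmx -> invmx (A *t B) = invmx A *t invmx B.
Proof.
move=> uA uB; have uAB := tensmx_unit_any uA uB.
by rewrite -[RHS]mul1mx -(mulVmx uAB) -mulmxA tensmx_mul !mulmxV // tensmx11 mulmx1.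
Qed.

Lemma invmx_intertwine m n (A : 'M[K]_m) (B : 'M[K]_n) (f : 'M[K]_(m, n)) :
  A \in unitmx -> B \in unitmx -> A *m f = f *m B -> invmx A *m f = f *m invmx B.
Proof.
move=> uA uB Af.
by rewrite -[LHS]mulmx1 -(mulmxV uB) mulmxA -(mulmxA _ f) -Af mulmxA mulVmx // mul1mx.
Qed.

Lemma mulmx_invmx_eq1 n (A L : 'M[K]_n) : A \in unitmx -> L *m invmx A = 1%:M -> L = A.
Proof. by move=> uA LAi; rewrite -[L]mulmx1 -(mulVmx uA) mulmxA LAi mul1mx. Qed.

Lemma tensmx1_eq1 n (A : 'M[K]_n) : (1%:M : 'M[K]_1) *t A = 1%:M -> A = 1%:M.
Proof. by rewrite -(tensmx11 _ 1 n) !tens_scalar1mx => /castmx_inj. Qed.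

End InvertibleKronecker.

Section HomComonad.
Variables (K : fieldType) (H : obj K).
Variables (Delta : 'M[K]_(odim H, odim H * odim H)) (eps : 'M[K]_(odim H, 1)).
Hypothesis Delta_mor : @is_mor K H (tens_obj H H) Delta.
Hypothesis eps_mor : @is_mor K H (unit_obj K) eps.

Local Notation h := (odim H).
Local Notation a := (oalpha H).
Local Notation ai := (invmx (oalpha H)).
Local Notation I := (1%:M : 'M[K]_h).
Let a_unit : a \in unitmx := oalpha_unit H.

(* The H-component of [delta X], i.e. [h |-> h_1 (x) alpha_H^{-1}(h_2)]. *)
Let Deltai := Delta *m (I *t ai).

Lemma alpha_Delta : a *m Delta = Delta *m (a *t a).
Proof. exact: Delta_mor. Qed.

Lemma invalpha_Delta : ai *m Delta = Delta *m (ai *t ai).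
Proof.
rewrite -invmx_tens //.
exact: invmx_intertwine a_unit (tensmx_unit_any a_unit a_unit) alpha_Delta.
Qed.

Lemma alpha_eps : a *m eps = eps.
Proof. by have := eps_mor; rewrite /is_mor /= mulmx1. Qed.

Lemma alpha_Deltai : a *m Deltai = Deltai *m (a *t a).
Proof.
by rewrite /Deltai mulmxA alpha_Delta -!mulmxA !tensmx_mul !mul1mx mulmx1 mulmxV // mulVmx.
Qed.

Lemma delta_is_mor X : is_mor (delta Delta X).
Proof.
by rewrite /is_mor /delta /= mulmx_castr tensmxA mulmx_castmx !tensmx_mul -alpha_Deltai.
Qed.

Lemma epsC_is_mor X : is_mor (epsC eps X).
Proof.
have uX := oalpha_unit X.
rewrite /is_mor /epsC /= mulmx_castr tensmx_mul mulmxV // alpha_eps.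
by rewrite castmx_muln1_mul tensmx_mul mulVmx // mulmx1.
Qed.

Lemma delta_natural X Y (f : 'M[K]_(odim X, odim Y)) : is_mor f ->
  delta Delta X *m Hdd_mor H (Hdd_mor H f) = Hdd_mor H f *m delta Delta Y.
Proof.
move=> f_mor; rewrite /Hdd_mor /delta /= tensmxA tensmx11 mulmx_castmx mulmx_castr.
by rewrite !tensmx_mul f_mor mulmx1 mul1mx.
Qed.

Lemma epsC_natural X Y (f : 'M[K]_(odim X, odim Y)) : is_mor f ->
  epsC eps X *m f = Hdd_mor H f *m epsC eps Y.
Proof.
move=> f_mor; rewrite /Hdd_mor /epsC /= castmx_muln1_mul mulmx_castr !tensmx_mul.
by rewrite (invmx_intertwine (oalpha_unit X) (oalpha_unit Y) f_mor) mulmx1 mul1mx.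
Qed.

Let coassocL := Deltai *m (Deltai *t I).
Let coassocR := castmx (erefl, mulnA h h h) (Deltai *m (a *t Deltai)).
(* The common invertible right factor of [coassocL] and [coassocR]. *)
Let twist := (I *t ai) *t (ai *m ai).

Lemma coassocL_twist : coassocL = Delta *m (Delta *t a) *m twist.
Proof.
have Deltai_I : Deltai *t I = (Delta *t I) *m ((I *t ai) *t I) by rewrite tensmx_mul mulmx1.
have Delta_a : Delta *t a = (Delta *t I) *m (1%:M *t a) by rewrite tensmx_mul mul1mx mulmx1.
have swap : (I *t ai) *m (Delta *t I) = (Delta *t I) *m (1%:M *t ai).
  by rewrite !tensmx_mul !mul1mx !mulmx1.
rewrite /coassocL Deltai_I Delta_a /Deltai /twist !mulmxA -(mulmxA Delta (I *t ai)) swap.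
rewrite -!mulmxA; congr (_ *m (_ *m _)).
by rewrite !tensmx_mul !mul1mx mulmx1 mulmxA mulmxV // mul1mx.
Qed.

Lemma coassocR_twist :
  coassocR = castmx (erefl, mulnA h h h) (Delta *m (a *t Delta)) *m twist.
Proof.
have a_Deltai : a *t Deltai = (a *t Delta) *m (I *t (I *t ai)) by rewrite tensmx_mul mulmx1.
have swap : (I *t ai) *m (a *t Delta) = (a *t Delta) *m (I *t (ai *t ai)).
  by rewrite !tensmx_mul invalpha_Delta mul1mx mulmx1.
rewrite /twist tensmxA mulmx_castmx /coassocR a_Deltai /Deltai mulmxA -(mulmxA Delta) swap.
rewrite -!mulmxA (tensmx_mul I (ai *t ai) I (I *t ai)) (tensmx_mul ai ai I ai).
by rewrite mul1mx mulmx1.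
Qed.

Lemma twist_invertible : twist *m ((I *t a) *t (a *m a)) = 1%:M.
Proof.
rewrite /twist !tensmx_mul mulmx1 mulVmx // mulmxA -(mulmxA ai) mulVmx // mulmx1.
by rewrite mulVmx // !tensmx11.
Qed.

Lemma coassocLR_iff :
  coassocL = coassocR <->
  castmx (erefl, mulnA h h h) (Delta *m (a *t Delta)) = Delta *m (Delta *t a).
Proof.
rewrite coassocL_twist coassocR_twist; split=> [eqLR|->] //.
by rewrite -[LHS]mulmx1 -twist_invertible mulmxA -eqLR -mulmxA twist_invertible mulmx1.
Qed.

Lemma delta_coassoc_iff X :
  delta Delta X *m Hdd_mor H (delta Delta X) = delta Delta X *m delta Delta (Hdd H X) <->
  (oalpha X *m oalpha X) *t coassocL = (oalpha X *m oalpha X) *t coassocR.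
Proof.
rewrite /Hdd_mor /delta /= tensmx_castl !tensmxA !castmx_comp !mulmx_castmx !tensmx_mul.
by rewrite /coassocR tensmx_castr; apply: castmx_eq_castmxE.
Qed.

Lemma delta_lcounit_iff X :
  delta Delta X *m Hdd_mor H (epsC eps X) = 1%:M <->
  (1%:M : 'M[K]_(odim X)) *t
    (castmx (erefl, mul1n h) (Delta *m (eps *t I)) *m ai) = 1%:M.
Proof.
have uX := oalpha_unit X.
have Deltai_eps : Deltai *m (eps *t 1%:M) = castmx (erefl, esym (mul1n h))
    (castmx (erefl, mul1n h) (Delta *m (eps *t I)) *m ai).
  by rewrite castmx_mul1n_mul castmx_comp castmx_id /Deltai -!mulmxA !tensmx_mul !mulmx1 !mul1mx.
rewrite /Hdd_mor /delta /epsC /= tensmx_castl tensmxA castmx_comp mulmx_castmx.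
by rewrite tensmx_mul mulmxV // Deltai_eps tensmx_castr castmx_comp castmx_id.
Qed.

Lemma delta_rcounit_iff X :
  delta Delta X *m epsC eps (Hdd H X) = 1%:M <->
  (1%:M : 'M[K]_(odim X)) *t
    (castmx (erefl, muln1 h) (Delta *m (I *t eps)) *m ai) = 1%:M.
Proof.
have uX := oalpha_unit X.
have invalpha_eps : ai *m eps = eps by rewrite -{1}alpha_eps mulmxA mulVmx // mul1mx.
have Deltai_eps : Deltai *m (ai *t eps) = castmx (erefl, esym (muln1 h))
    (castmx (erefl, muln1 h) (Delta *m (I *t eps)) *m ai).
  rewrite castmx_muln1_mul castmx_comp castmx_id /Deltai -!mulmxA !tensmx_mul.
  by rewrite !mulmx1 !mul1mx invalpha_eps.
rewrite /Hdd_mor /delta /epsC /= invmx_tens // tensmxA castmx_comp mulmx_castmx.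
by rewrite tensmx_mul mulmxV // Deltai_eps tensmx_castr castmx_comp castmx_id.
Qed.

Lemma comonad_iff_hom_coalgebra : is_comonad Delta eps <-> is_hom_coalgebra Delta eps.
Proof.
split=> [[_ [_ [_ [_ [coassoc [lcounit rcounit]]]]]] | [_ coassoc lcounit rcounit]].
  split; first exact: alpha_eps.
  - apply/coassocLR_iff; have := (delta_coassoc_iff _).1 (coassoc (unit_obj K)).
    by rewrite /= mulmx1 !tens_scalar1mx => /castmx_inj.
  - apply: mulmx_invmx_eq1 a_unit _; apply: tensmx1_eq1.
    exact: (delta_lcounit_iff _).1 (lcounit (unit_obj K)).
  - apply: mulmx_invmx_eq1 a_unit _; apply: tensmx1_eq1.
    exact: (delta_rcounit_iff _).1 (rcounit (unit_obj K)).
split; first exact: delta_is_mor.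
split; first exact: epsC_is_mor.
split; first exact: delta_natural.
split; first exact: epsC_natural.
split; last split.
- by move=> X; apply/delta_coassoc_iff; rewrite (coassocLR_iff.2 coassoc).
- by move=> X; apply/delta_lcounit_iff; rewrite lcounit mulmxV // tensmx11.
- by move=> X; apply/delta_rcounit_iff; rewrite rcounit mulmxV // tensmx11.
Qed.

Lemma comodule_coassoc_iff M (rho : 'M[K]_(odim M, odim M * h)) :
  castmx (erefl, mulnA _ _ _) (rho *m (oalpha M *t Delta)) = rho *m (rho *t a) <->
  rho *m @Hdd_mor K H M (Hdd H M) rho = rho *m delta Delta M.
Proof.
have rho_delta : rho *m delta Delta M =
    castmx (erefl, mulnA _ _ _) (rho *m (oalpha M *t Delta)) *m (1%:M *t ai).
  rewrite -tensmx11 tensmxA mulmx_castmx /delta mulmx_castr /Deltai.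
  by rewrite -mulmxA tensmx_mul mulmx1.
have rho_rho : rho *m (rho *t a) = rho *m (rho *t 1%:M) *m (1%:M *t a).
  by rewrite -mulmxA tensmx_mul mulmx1 mul1mx.
rewrite /Hdd_mor rho_delta rho_rho; split=> [->|->].
  by rewrite -!mulmxA tensmx_mul mulmx1 mulmxV // tensmx11 mulmx1.
by rewrite -!mulmxA tensmx_mul mulmx1 mulVmx // tensmx11 mulmx1.
Qed.

Lemma comodule_counit_iff M (rho : 'M[K]_(odim M, odim M * h)) :
  castmx (erefl, muln1 _) (rho *m (1%:M *t eps)) = oalpha M <-> rho *m epsC eps M = 1%:M.
Proof.
have uM := oalpha_unit M.
have -> : rho *m epsC eps M
    = castmx (erefl, muln1 _) (rho *m (1%:M *t eps)) *m invmx (oalpha M).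
  by rewrite castmx_muln1_mul /epsC mulmx_castr -mulmxA tensmx_mul mul1mx mulmx1.
by split=> [->|]; [rewrite mulmxV | apply: mulmx_invmx_eq1].
Qed.

Lemma hom_comodule_iff_comonad_comodule M (rho : 'M[K]_(odim M, odim M * h)) :
  is_hom_comodule Delta eps rho <-> is_comonad_comodule Delta eps rho.
Proof.
by split=> -[rho_mor coassoc counit]; split=> //;
  [apply/comodule_coassoc_iff | apply/comodule_counit_iff
  |apply/comodule_coassoc_iff | apply/comodule_counit_iff].
Qed.

Lemma hom_comodule_mor_iff M N (rhoM : 'M[K]_(odim M, odim M * h))
    (rhoN : 'M[K]_(odim N, odim N * h)) (f : 'M[K]_(odim M, odim N)) :
  hom_comodule_mor rhoM rhoN f <-> comonad_comodule_mor rhoM rhoN f.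
Proof. by split=> -[f_mor colin]; split. Qed.

End HomComonad.

Theorem lemma4p1 (K : fieldType) (char0 : [pchar K] =i pred0)
  (H : obj K) (Delta : 'M[K]_(odim H, odim H * odim H))
  (eps : 'M[K]_(odim H, 1))
  (hDelta : @is_mor K H (tens_obj H H) Delta)
  (heps : @is_mor K H (unit_obj K) eps) :
  (is_comonad Delta eps <-> is_hom_coalgebra Delta eps) /\
  (is_hom_coalgebra Delta eps ->
     (forall (M : obj K) (rho : 'M[K]_(odim M, odim M * odim H)),
        is_hom_comodule Delta eps rho <-> is_comonad_comodule Delta eps rho) /\
     (forall (M N : obj K) (rhoM : 'M[K]_(odim M, odim M * odim H))
             (rhoN : 'M[K]_(odim N, odim N * odim H))
             (f : 'M[K]_(odim M, odim N)),
        is_hom_comodule Delta eps rhoM -> is_hom_comodule Delta eps rhoN ->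
        (hom_comodule_mor rhoM rhoN f <-> comonad_comodule_mor rhoM rhoN f))).
Proof.
split; first exact: comonad_iff_hom_coalgebra.
move=> _; split; first exact: hom_comodule_iff_comonad_comodule.
by move=> M N rhoM rhoN f _ _; apply: hom_comodule_mor_iff.
Qed.
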